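(* Let $n\ge 3$. The cardinality statistic $I\mapsto|I|$ is not homomesic under rowmotion on $\mathcal{IC}([n])$. More precisely, with $[i,j]=\{i,\dots,j\}$: the orbit $\{\emptyset,[n]\}$ has average cardinality $\frac n2$; for each $1\le k<\frac n2$, the orbit of $[1,k]$ (of size $n+2$) has average cardinality $\frac{2k(n-k)+n}{n+2}$; and, when $n$ is even, the orbit of $[1,\frac n2]$ (of size $\frac{n+2}{2}$) has average cardinality $\frac n2$.
   Context: $[n]$ denotes the chain poset $1<2<\cdots<n$. A subset $I\subseteq P$ of a finite poset is interval-closed if for all $x,y\in I$ and $z\in P$ with $x\le z\le y$ we have $z\in I$; $\mathcal{IC}(P)$ is the set of interval-closed subsets. For $x\in P$ the toggle $t_x$ sends $I$ to $I\triangle\{x\}$ if that is interval-closed and to $I$ otherwise. Rowmotion is $\mathrm{Row}=t_{x_1}\circ\cdots\circ t_{x_N}$, where $(x_1,\dots,x_N)$ is a linear extension of $P$ (toggling from the top down). A statistic is homomesic under rowmotion if its average over every rowmotion orbit is the same constant. *)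

From mathcomp Require Import all_boot all_order all_algebra.
Set Implicit Arguments. Unset Strict Implicit. Unset Printing Implicit Defensive.
Import GRing.Theory Num.Theory.

(* The chain [n] = {1 < ... < n} is modelled by 'I_n, where the ordinal
   x : 'I_n stands for the element x+1 of [n]; the order is the order of nat. *)

Definition interval_closed (n : nat) (I : {set 'I_n}) : bool :=
  [forall x in I, forall y in I, forall z : 'I_n,
     ((x <= z) && (z <= y))%N ==> (z \in I)].

Definition toggle (n : nat) (x : 'I_n) (I : {set 'I_n}) : {set 'I_n} :=
  let J := if x \in I then I :\ x else x |: I in
  if interval_closed J then J else I.

(* Rowmotion: Row = t_{x_1} o ... o t_{x_N} for the (unique) linear extension
   x_1 < ... < x_N of the chain, i.e. toggling from the top down. *)
Definition rowmotion (n : nat) (I : {set 'I_n}) : {set 'I_n} :=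
  foldr (@toggle n) I (enum 'I_n).

Definition row_orbit (n : nat) (I : {set 'I_n}) : seq {set 'I_n} :=
  orbit (@rowmotion n) I.

Definition orbit_avg (n : nat) (f : {set 'I_n} -> nat) (I : {set 'I_n}) : rat :=
  ((\sum_(J <- row_orbit I) f J)%:R / (size (row_orbit I))%:R)%R.

Definition homomesic (n : nat) (f : {set 'I_n} -> nat) : Prop :=
  exists c : rat, forall I : {set 'I_n}, interval_closed I -> orbit_avg f I = c.

Definition ival (n : nat) (i j : nat) : {set 'I_n} :=
  [set x : 'I_n | (i <= x.+1 <= j)%N].

Definition card_stat (n : nat) (I : {set 'I_n}) : nat := #|I|.

From mathcomp Require Import all_boot all_order all_algebra zify.
Import GRing.Theory Num.Theory.
Set Implicit Arguments. Unset Strict Implicit. Unset Printing Implicit Defensive.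

(* On the chain 'I_n every interval-closed set is a segment [a, b), and the
   toggles act on segments by moving one endpoint (toggle_seg).  Following
   the toggles from the top down gives the two rules of rowmotion:
     - a nonempty segment [a, b) with b < n moves up to [a+1, b+1);
     - a segment [a, n) reaching the top wraps to [0, a) (for a = n this
       sends the empty set to the whole chain).
   A general lemma (orbit_of_cycle) identifies an orbit with an explicit
   cyclic list of distinct points.  Hence the orbit of [0, k), 0 < k <= n/2,
   is the list of n-k+1 translates of [0, k) followed by the k+1 translates
   of [0, n-k) (only the first k+1 sets when n = 2k), and its cardinality sum
   is (n-k+1) k + (k+1)(n-k).  The orbit of the empty set is {empty, [n]}.
   The averages n/2 and (3n-2)/(n+2) of the orbits of the empty set and of
   [1, 1] differ for n >= 3, so the cardinality is not homomesic. *)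

Ltac decide_ifs :=
  repeat match goal with
  | |- context [if ?c then _ else _] =>
      first [ rewrite (_ : c = true); last by lia
            | rewrite (_ : c = false); last by lia ]; cbv iota
  end.

Section Segments.
Variable n : nat.

(* The half-open segment [a, b) = {a, ..., b-1} of 'I_n (0-based); it is empty
   when b <= a, so the empty set and the whole chain are segments too. *)
Definition seg (a b : nat) : {set 'I_n} := [set x : 'I_n | a <= x < b].

Lemma seg_empty a b : b <= a -> seg a b = set0.
Proof. by move=> hba; apply/setP=> x; rewrite !inE; lia. Qed.

Lemma seg_full : seg 0 n = setT.
Proof. by apply/setP=> x; rewrite !inE ltn_ord. Qed.

Lemma card_seg a b : a <= b <= n -> #|seg a b| = b - a.
Proof.
move=> /andP[hab hbn].
have -> : #|seg a b| = count (fun i => a <= i < b) (iota 0 n).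
  by rewrite -val_enum_ord count_map enumT cardsE cardE /enum_mem size_filter.
rewrite (_ : n = a + (b - a) + (n - b)); last by lia.
rewrite !iotaD !count_cat !add0n.
rewrite (@eq_in_count _ _ pred0 (iota 0 a)); last by move=> i; rewrite mem_iota /=; lia.
rewrite (@eq_in_count _ _ predT (iota a _)); last by move=> i; rewrite mem_iota /=; lia.
rewrite (@eq_in_count _ _ pred0 (iota (a + _) _)); last by move=> i; rewrite mem_iota /=; lia.
by rewrite !count_pred0 count_predT size_iota addn0.
Qed.

Lemma seg_inj a b c d : a < b <= n -> c < d <= n -> seg a b = seg c d ->
  a = c /\ b = d.
Proof.
move=> /andP[hab hbn] /andP[hcd hdn] eq_seg.
have ha : a < n by lia.
have hc : c < n by lia.
have hb : b.-1 < n by lia.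
have hd : d.-1 < n by lia.
have : Ordinal ha \in seg c d by rewrite -eq_seg inE /=; lia.
have : Ordinal hc \in seg a b by rewrite eq_seg inE /=; lia.
have : Ordinal hb \in seg c d by rewrite -eq_seg inE /=; lia.
have : Ordinal hd \in seg a b by rewrite eq_seg inE /=; lia.
rewrite !inE /=; lia.
Qed.

Lemma ival_seg k : ival n 1 k = seg 0 k.
Proof. by apply/setP=> x; rewrite !inE; lia. Qed.

Lemma seg_interval_closed a b : interval_closed (seg a b).
Proof.
apply/forall_inP=> x; rewrite inE => hx; apply/forall_inP=> y; rewrite inE => hy.
by apply/forallP=> z; apply/implyP; rewrite inE; lia.
Qed.

Definition flip (x : 'I_n) (I : {set 'I_n}) : {set 'I_n} :=
  if x \in I then I :\ x else x |: I.

Lemma flip_mem (x y : 'I_n) I :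
  (y \in flip x I) = if x \in I then (y != x) && (y \in I) else (y == x) || (y \in I).
Proof. by rewrite /flip; case: ifP; rewrite !inE. Qed.

Lemma toggle_to_seg (x : 'I_n) I c d : flip x I = seg c d -> toggle x I = seg c d.
Proof. by rewrite /toggle -/(flip x I) => ->; rewrite seg_interval_closed. Qed.

Lemma toggle_gap (x u v z : 'I_n) I : u \in flip x I -> v \in flip x I ->
  u <= z <= v -> z \notin flip x I -> toggle x I = I.
Proof.
rewrite /toggle -/(flip x I) => hu hv huzv hz.
case: ifP => // /forall_inP/(_ u hu)/forall_inP/(_ v hv).
by move=> /forallP/(_ z); rewrite huzv (negbTE hz).
Qed.

Lemma toggle_set0 (x : 'I_n) : toggle x set0 = seg x x.+1.
Proof. by apply: toggle_to_seg; apply/setP=> y; rewrite flip_mem !inE -val_eqE /=; lia. Qed.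

(* Toggling x in a nonempty segment [a, b) succeeds exactly when it adds or
   removes an endpoint; otherwise the result would have a gap. *)
Lemma toggle_seg (x : 'I_n) a b : a < b <= n ->
  toggle x (seg a b) =
    if x == b :> nat then seg a b.+1 else if x.+1 == a then seg a.-1 b
    else if x == a :> nat then seg a.+1 b else if x.+1 == b then seg a b.-1
    else seg a b.
Proof.
move=> /andP[hab hbn]; have hx := ltn_ord x.
have flip_seg y : (y \in flip x (seg a b)) =
    if a <= x < b then (y != x) && (a <= y < b) else (y == x) || (a <= y < b).
  by rewrite flip_mem !inE.
do 4 (case: ifP => ?; first by apply: toggle_to_seg; apply/setP=> y;
                              rewrite flip_seg inE -val_eqE /=; case: ifP; lia).
(* Otherwise x lies below a-1, strictly inside, or above b: exhibit the gap. *)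
have ha : a < n by lia.
have hb1 : b.-1 < n by lia.
case: (ltnP x a) => [hxa | hax]; last case: (ltnP x b) => [hxb | hbx].
- have ha1 : a.-1 < n by lia.
  apply: (@toggle_gap x x (Ordinal hb1) (Ordinal ha1));
    rewrite ?flip_seg -?val_eqE /=; try case: ifP; lia.
- apply: (@toggle_gap x (Ordinal ha) (Ordinal hb1) x);
    rewrite ?flip_seg -?val_eqE /=; try case: ifP; lia.
- have hb : b < n by lia.
  apply: (@toggle_gap x (Ordinal ha) x (Ordinal hb));
    rewrite ?flip_seg -?val_eqE /=; try case: ifP; lia.
Qed.

(* Rowmotion toggles n-1, ..., 1, 0 in turn.  To compute it, it suffices to
   exhibit the states Q m reached after toggling the elements >= m. *)
Lemma rowmotion_by_states (Q : nat -> {set 'I_n} -> Prop) I :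
  Q n I -> (forall (x : 'I_n) S, Q x.+1 S -> Q x (toggle x S)) ->
  Q 0 (rowmotion I).
Proof.
move=> Qn Qstep; rewrite /rowmotion.
suff states m : m <= n -> Q (n - m) (foldr (@toggle n) I (drop (n - m) (enum 'I_n))).
  by have := states n (leqnn n); rewrite subnn drop0.
elim: m => [|m IHm] hm; first by rewrite subn0 drop_oversize // size_enum_ord.
have hx : n - m.+1 < n by lia.
pose x := Ordinal hx.
have nth_x : nth x (enum 'I_n) x = x by rewrite nth_ord_enum.
rewrite (drop_nth x) ?size_enum_ord //= nth_x.
apply: (Qstep x); rewrite /= (_ : (n - m.+1).+1 = n - m); last by lia.
by apply: IHm; lia.
Qed.

Lemma rowmotion_shift a b : a < b < n -> rowmotion (seg a b) = seg a.+1 b.+1.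
Proof.
move=> hab.
pose state m := seg (if m <= a then a.+1 else a) (if m <= b then b.+1 else b).
apply: (@rowmotion_by_states (fun m S => S = state m)) => [|x S ->].
  by rewrite /state; decide_ifs.
have hx := ltn_ord x.
case: (ltngtP x a) => hxa; case: (ltngtP x b) => hxb; try lia;
  by rewrite /state; decide_ifs; rewrite toggle_seg; try lia; decide_ifs.
Qed.

(* A segment reaching the top wraps around to the complementary bottom
   segment; in particular rowmotion sends the empty set [n, n) to [0, n).
   After toggling the elements >= m the state is [a, m) if a < m, and [m, a)
   otherwise. *)
Lemma rowmotion_top a : a <= n -> rowmotion (seg a n) = seg 0 a.
Proof.
move=> han.
pose state m := if a < m then seg a m else seg m a.
apply: (@rowmotion_by_states (fun m S => S = state m)) => [|x S ->].
  by rewrite /state; case: ltnP => // hna; congr seg; lia.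
have hx := ltn_ord x; rewrite /state.
case: (ltngtP a x) => hax.
- by decide_ifs; rewrite toggle_seg; try lia; decide_ifs; congr seg; lia.
- case: (ltnP x.+1 a) => hxa; decide_ifs.
    by rewrite toggle_seg; try lia; decide_ifs; congr seg; lia.
  by rewrite seg_empty // toggle_set0; congr seg; lia.
- decide_ifs; rewrite toggle_seg; try lia; decide_ifs.
  by rewrite !seg_empty //; lia.
Qed.

End Segments.

Lemma orbit_of_cycle (T : finType) (f : T -> T) (E : nat -> T) (L : nat) :
  0 < L -> (forall i, i.+1 < L -> f (E i) = E i.+1) -> f (E L.-1) = E 0 ->
  (forall i j, i < L -> j < L -> E i = E j -> i = j) ->
  orbit f (E 0) = [seq E i | i <- iota 0 L].
Proof.
move=> L_gt0 f_step f_wrap E_inj.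
have iter_E i : i < L -> iter i f (E 0) = E i.
  by elim: i => [|i IHi] hi //; rewrite iterS IHi ?f_step //; lia.
have traject_E : traject f (E 0) L = [seq E i | i <- iota 0 L].
  apply: (@eq_from_nth _ (E 0)) => [|i]; rewrite size_traject ?size_map ?size_iota //.
  by move=> hi; rewrite nth_traject // (nth_map 0) ?size_iota // nth_iota // iter_E.
have uniq_E : uniq (traject f (E 0) L).
  rewrite traject_E map_inj_in_uniq ?iota_uniq // => i j.
  by rewrite !mem_iota !add0n; apply: E_inj.
rewrite -traject_E; case: L L_gt0 {f_step E_inj traject_E} f_wrap iter_E uniq_E => // m _.
move=> f_wrap iter_E uniq_E.
have cycle_E : fcycle f (traject f (E 0) m.+1).
  by rewrite trajectS /= rcons_path fpath_traject last_traject iter_E /= ?f_wrap.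
by rewrite (orbitE cycle_E uniq_E) trajectS ?mem_head //= eqxx rot0.
Qed.

Lemma sum_step (L m c1 c2 : nat) : m <= L ->
  \sum_(0 <= i < L) (if i < m then c1 else c2) = m * c1 + (L - m) * c2.
Proof.
move=> hmL; rewrite (@big_cat_nat _ _ _ m 0 L _ _ (leq0n m) hmL) /=.
rewrite (@eq_big_nat _ _ _ 0 m _ (fun=> c1)) => [|i /andP[_ ->] //].
rewrite (@eq_big_nat _ _ _ m L _ (fun=> c2)) => [|i /andP[him _]]; last first.
  by rewrite ltnNge him.
by rewrite !sum_nat_const_nat subn0.
Qed.

Section OrbitOfInitialSegment.
Variables n k : nat.
Hypotheses (k_gt0 : 0 < k) (k_half : k.*2 <= n).

(* The orbit of [0, k) first slides the k-segment up to [n-k, n), wraps to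
   [0, n-k), slides that (n-k)-segment up to [k, n) and wraps back to [0, k).
   When n = 2k the second half repeats the first, so the orbit closes early. *)
Definition orbit_seg (i : nat) : {set 'I_n} :=
  if i <= n - k then seg n i (i + k)
  else let j := i - (n - k).+1 in seg n j (j + (n - k)).

Definition orbit_period : nat := if k.*2 == n then k.+1 else n.+2.

Lemma orbit_seg_bounds i : i < orbit_period ->
  let j := i - (n - k).+1 in
  if i <= n - k then i < i + k <= n else j < j + (n - k) <= n.
Proof. by rewrite /orbit_period; case: eqP => hn hi /=; case: ifP; lia. Qed.

Lemma rowmotion_orbit_seg i : i.+1 < orbit_period ->
  rowmotion (orbit_seg i) = orbit_seg i.+1.
Proof.
move=> hi; have := orbit_seg_bounds hi; have := orbit_seg_bounds (ltnW hi).
rewrite /orbit_seg /orbit_period in hi * => /=.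
case: (ltngtP i (n - k)) => hink; decide_ifs => bounds_i bounds_i1.
- by rewrite rowmotion_shift; [congr seg; lia | lia].
- by rewrite rowmotion_shift; [congr seg; lia | move: hi; case: eqP; lia].
- by rewrite (_ : i + k = n) ?rowmotion_top; [congr seg; lia | lia | lia].
Qed.

Lemma rowmotion_orbit_seg_last :
  rowmotion (orbit_seg orbit_period.-1) = orbit_seg 0.
Proof.
rewrite /orbit_seg /orbit_period; case: eqP => hn /=; decide_ifs.
  by rewrite (_ : k.+1.-1 + k = n) ?rowmotion_top; [congr seg; lia | lia | lia].
by rewrite (_ : _ + (n - k) = n) ?rowmotion_top; [congr seg; lia | lia | lia].
Qed.

Lemma orbit_seg_inj i j : i < orbit_period -> j < orbit_period ->
  orbit_seg i = orbit_seg j -> i = j.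
Proof.
move=> hi hj; have := orbit_seg_bounds hi; have := orbit_seg_bounds hj.
move: hi hj; rewrite /orbit_seg /orbit_period.
case: eqP => hn hi hj; case: ifP => hjk; case: ifP => hik /= bj bi /seg_inj;
  move=> /(_ bi bj); lia.
Qed.

Lemma row_orbit_initial_seg :
  row_orbit (seg n 0 k) = [seq orbit_seg i | i <- iota 0 orbit_period].
Proof.
have -> : seg n 0 k = orbit_seg 0 by rewrite /orbit_seg; decide_ifs.
apply: orbit_of_cycle.
- by rewrite /orbit_period; case: eqP.
- exact: rowmotion_orbit_seg.
- exact: rowmotion_orbit_seg_last.
- exact: orbit_seg_inj.
Qed.

Lemma card_orbit_seg i : i < orbit_period ->
  #|orbit_seg i| = if i < (n - k).+1 then k else n - k.
Proof.
move=> hi; have := orbit_seg_bounds hi; rewrite /orbit_seg ltnS.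
by case: ifP => _ bounds; rewrite card_seg //; lia.
Qed.

Lemma sum_card_row_orbit :
  \sum_(J <- row_orbit (seg n 0 k)) #|J|
    = (n - k).+1 * k + (orbit_period - (n - k).+1) * (n - k).
Proof.
rewrite row_orbit_initial_seg big_map -sum_step; last first.
  by rewrite /orbit_period; case: eqP; lia.
rewrite /index_iota subn0 big_seq [RHS]big_seq.
by apply: eq_bigr => i; rewrite mem_iota => hi; apply: card_orbit_seg.
Qed.

End OrbitOfInitialSegment.

Lemma row_orbit_set0 (n : nat) : 0 < n ->
  row_orbit (set0 : {set 'I_n}) = [:: set0; setT].
Proof.
move=> n_gt0; rewrite /row_orbit.
have set0_seg : set0 = seg n n n by rewrite seg_empty.
have setT_seg : setT = seg n 0 n by rewrite seg_full.
apply: (@orbit_of_cycle _ _ (fun i => if i == 0 then set0 else setT) 2) => //.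
- by case=> // _; rewrite set0_seg rowmotion_top // seg_full.
- by rewrite /= setT_seg rowmotion_top // seg_empty.
- case=> [|[|i]] [|[|j]] //= _ _ /setP/(_ (Ordinal n_gt0)); by rewrite !inE.
Qed.

Lemma orbit_avg_set0 (n : nat) : 0 < n ->
  orbit_avg (@card_stat n) set0 = (n%:R / 2%:R)%R.
Proof.
move=> n_gt0; rewrite /orbit_avg row_orbit_set0 //.
by rewrite !big_cons big_nil /card_stat cards0 cardsT card_ord add0n addn0.
Qed.

(* For 0 < k < n/2 the orbit of [1, k] has n+2 elements: n-k+1 of size k and
   k+1 of size n-k. *)
Lemma orbit_avg_initial_seg (n k : nat) : 0 < k -> k.*2 < n ->
  size (row_orbit (ival n 1 k)) = n.+2 /\
  orbit_avg (@card_stat n) (ival n 1 k)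
    = ((2 * k * (n - k) + n)%N%:R / (n + 2)%N%:R)%R.
Proof.
move=> k_gt0 hkn; have hk : k.*2 <= n by lia.
have period : orbit_period n k = n.+2 by rewrite /orbit_period ifF //; lia.
have size_orbit : size (row_orbit (ival n 1 k)) = n.+2.
  by rewrite ival_seg row_orbit_initial_seg // size_map size_iota period.
split=> //; rewrite /orbit_avg /card_stat size_orbit ival_seg.
rewrite sum_card_row_orbit // period addn2.
by congr (_%:R / _)%R; nia.
Qed.

(* For n = 2k the orbit of [1, k] consists of the k+1 translates of [1, k]. *)
Lemma orbit_avg_half_seg (n : nat) : 0 < n -> ~~ odd n ->
  size (row_orbit (ival n 1 n./2)) = (n + 2)./2 /\
  orbit_avg (@card_stat n) (ival n 1 n./2) = (n%:R / 2%:R)%R.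
Proof.
move=> n_gt0 n_even.
have n_double : n = (n./2).*2 by rewrite -{1}(odd_double_half n) (negbTE n_even).
set k := n./2 in n_double *.
have k_gt0 : 0 < k by lia.
have period : orbit_period n k = k.+1 by rewrite /orbit_period -n_double eqxx.
have size_orbit : size (row_orbit (ival n 1 k)) = k.+1.
  by rewrite ival_seg row_orbit_initial_seg ?size_map ?size_iota ?period //; lia.
split; first by rewrite size_orbit; lia.
rewrite /orbit_avg /card_stat size_orbit ival_seg sum_card_row_orbit ?period //; last by lia.
have -> : (n - k).+1 * k + (k.+1 - (n - k).+1) * (n - k) = k * k.+1 by nia.
rewrite natrM mulfK ?pnatr_eq0 // n_double -muln2 natrM mulfK //.
Qed.

(* Proposition 3.14.  Non-homomesy: the orbit averages n/2 of the empty set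
   and (3n - 2)/(n + 2) of [1, 1] would be equal, i.e. (n - 2)^2 = 0. *)
Theorem proposition3p14 (n : nat) (hn : (3 <= n)%N) :
  ~ homomesic (@card_stat n) /\
  (row_orbit (set0 : {set 'I_n}) = [:: set0; setT] /\
   orbit_avg (@card_stat n) set0 = (n%:R / 2%:R)%R) /\
  (forall k : nat, (1 <= k)%N -> (k.*2 < n)%N ->
     size (row_orbit (ival n 1 k)) = n.+2 /\
     orbit_avg (@card_stat n) (ival n 1 k)
       = ((2 * k * (n - k) + n)%N%:R / (n + 2)%N%:R)%R) /\
  (~~ odd n ->
     size (row_orbit (ival n 1 n./2)) = (n + 2)./2 /\
     orbit_avg (@card_stat n) (ival n 1 n./2) = (n%:R / 2%:R)%R).
Proof.
have n_gt0 : 0 < n by lia.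
split; last first.
  split; first by split; [exact: row_orbit_set0 | exact: orbit_avg_set0].
  by split; [exact: orbit_avg_initial_seg | exact: orbit_avg_half_seg].
move=> [c avg_c].
have ic_set0 : interval_closed (set0 : {set 'I_n}).
  by rewrite -(@seg_empty n n n) // seg_interval_closed.
have ic_1 : interval_closed (ival n 1 1) by rewrite ival_seg seg_interval_closed.
have [_ avg_1] : _ /\ orbit_avg _ (ival n 1 1) = _ := @orbit_avg_initial_seg n 1 isT hn.
have := avg_c _ ic_1; rewrite -(avg_c _ ic_set0) avg_1 orbit_avg_set0 //.
move=> /eqP; rewrite eqr_div ?pnatr_eq0 ?addn2 // -!natrM eqr_nat.
by move=> /eqP; nia.
Qed.
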